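(* Let $s\ge 2$. Suppose the edges of the complete graph $K_s$ are coloured with $s-1$ colours such that each colour class is a matching and every set of $4$ vertices spans edges of either exactly $3$ or exactly $6$ different colours. Then $s=2^p$ for some integer $p$. *)

From mathcomp Require Import all_boot.
Set Implicit Arguments. Unset Strict Implicit. Unset Printing Implicit Defensive.

(* An edge colouring of the complete graph K_s on vertex set 'I_s with colours
   in a type C is a function col : 'I_s -> 'I_s -> C that is symmetric on edges
   (values on the diagonal col v v are irrelevant). *)
Definition sym_colouring (s : nat) (C : Type) (col : 'I_s -> 'I_s -> C) : Prop :=
  forall u v : 'I_s, u != v -> col u v = col v u.

Definition classes_are_matchings (s : nat) (C : Type) (col : 'I_s -> 'I_s -> C) : Prop :=
  forall u v w : 'I_s, u != v -> u != w -> v != w -> col u v <> col u w.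

Definition colours4 (s : nat) (C : eqType) (col : 'I_s -> 'I_s -> C)
  (a b c d : 'I_s) : nat :=
  size (undup [:: col a b; col a c; col a d; col b c; col b d; col c d]).

Definition four_sets_3_or_6 (s : nat) (C : eqType) (col : 'I_s -> 'I_s -> C) : Prop :=
  forall a b c d : 'I_s, uniq [:: a; b; c; d] ->
    colours4 col a b c d = 3 \/ colours4 col a b c d = 6.

From mathcomp Require Import all_boot.
From mathcomp Require Import fingroup perm pgroup abelian.

Set Implicit Arguments.
Unset Strict Implicit.
Unset Printing Implicit Defensive.

(* Since there are s - 1 colours, every colour class is a perfect matching, so
   each colour k gives a fixed-point-free involution [mate k] of the vertices.
   The 3-or-6 condition on 4-sets forces the "rectangle" rule: if ab and cd have
   the same colour, so have ac and bd.  Hence every [mate k] preserves colours,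
   and a composite of two distinct mates is again a mate.  Fixing a vertex z,
   the identity together with the mates then form a group of permutations of
   order s in which every element is an involution, so s is a power of 2. *)

Lemma card_exponent2 (gT : finGroupType) (G : {group gT}) :
  exponent G %| 2 -> exists p, #|G| = 2 ^ p.
Proof.
move=> dvd_exp2; have : pgroup 2 G.
  by rewrite -pnat_exponent (pnat_dvd dvd_exp2) ?pnat_id.
by case/p_natP=> p ->; exists p.
Qed.

Section MatchingColouring.

Variables (s : nat) (col : 'I_s -> 'I_s -> 'I_(s.-1)).
Hypotheses (hsym : sym_colouring col) (hmatch : classes_are_matchings col).
Hypothesis h4 : four_sets_3_or_6 col.

Lemma matching_inj u v w : u != v -> u != w -> col u v = col u w -> v = w.
Proof. by move=> uv uw E; apply/eqP; apply: contraPT E; exact: hmatch _ _ _ uv uw. Qed.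

Lemma rectangle_nondegenerate (a b c d : 'I_s) :
  uniq [:: a; b; c; d] ->
  col a b = col c d -> col a c = col b d.
Proof.
move=> abcd E; have [ac_bd|ac_bd] := eqVneq (col a c) (col b d) => //.
move: (abcd); rewrite /= !inE !negb_or => /and4P[/and3P[ab ac ad] /andP[bc bd] cd _].
have ba : b != a by rewrite eq_sym.
have da : d != a by rewrite eq_sym.
have db : d != b by rewrite eq_sym.
have le5 : colours4 col a b c d <= 5.
  rewrite /colours4 -[5]/(size [:: col a b; col a c; col a d; col b c; col b d]).
  apply: uniq_leq_size; first exact: undup_uniq.
  by move=> k; rewrite mem_undup !inE -E => /or4P[| | |/orP[|/orP[|]]] ->; rewrite ?orbT.
have ge4 : 4 <= colours4 col a b c d.
  rewrite /colours4 -[4]/(size [:: col a b; col a c; col a d; col b d]).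
  apply: uniq_leq_size; last first.
    by move=> k; rewrite mem_undup !inE => /or4P[] ->; rewrite ?orbT.
  have ab_ac : col a b != col a c by apply/eqP/hmatch.
  have ab_ad : col a b != col a d by apply/eqP/hmatch.
  have ac_ad : col a c != col a d by apply/eqP/hmatch.
  have ab_bd : col a b != col b d by rewrite hsym //; apply/eqP/hmatch.
  have ad_bd : col a d != col b d by rewrite hsym // [col b d]hsym //; apply/eqP/hmatch.
  by rewrite /= !inE !negb_or ab_ac ab_ad ab_bd ac_ad ac_bd ad_bd.
by case: (h4 abcd) => [c3|c6]; [move: ge4; rewrite c3 | move: le5; rewrite c6].
Qed.

Lemma rectangle (a b c d : 'I_s) :
  a != b -> c != d -> a != c -> col a b = col c d -> col a c = col b d.
Proof.
move=> ab cd ac E.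
have [eq_bd | bd] := eqVneq b d.
  subst d.
  have ba : b != a by rewrite eq_sym.
  have bc : b != c by rewrite eq_sym.
  have eq_ac : a = c by apply: matching_inj ba bc _; rewrite -hsym // E hsym.
  by rewrite eq_ac eqxx in ac.
have [eq_ad | ad] := eqVneq a d.
  subst d.
  have eq_bc : b = c by apply: matching_inj ab ac _; rewrite E hsym.
  by rewrite -eq_bc hsym.
have [eq_bc | bc] := eqVneq b c; first by subst c.
by apply: rectangle_nondegenerate; rewrite //= !inE !negb_or ab ac ad bc bd cd.
Qed.

Lemma mate_exists x k : exists2 y, y != x & col x y = k.
Proof.
have inj : {in [set~ x] &, injective (col x)}.
  by move=> y1 y2; rewrite !inE => xy1 xy2; apply: matching_inj; rewrite eq_sym.
have onto : col x @: [set~ x] = setT.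
  apply/eqP; rewrite eqEcard subsetT cardsT card_in_imset //.
  by rewrite cardsC1 !card_ord leqnn.
have /imsetP[y] : k \in col x @: [set~ x] by rewrite onto inE.
by rewrite !inE => yx ->; exists y.
Qed.

Definition mate (k : 'I_s.-1) (x : 'I_s) : 'I_s :=
  odflt x [pick y | (y != x) && (col x y == k)].

Lemma mateP k x : mate k x != x /\ col x (mate k x) = k.
Proof.
rewrite /mate; case: pickP => [y /andP[yx /eqP] //|none].
by have [y yx kE] := mate_exists x k; move: (none y); rewrite yx kE eqxx.
Qed.

Lemma mate_unique k x y : y != x -> col x y = k -> y = mate k x.
Proof.
have [mx kE] := mateP k x => yx yk.
by apply: (@matching_inj x); rewrite 1?eq_sym ?yk.
Qed.

Lemma mateK k : involutive (mate k).
Proof.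
move=> x; have [mx kE] := mateP k x.
by apply/esym/mate_unique; [rewrite eq_sym | rewrite hsym].
Qed.

Lemma mate_inj k : injective (mate k).
Proof. exact: inv_inj (mateK k). Qed.

Lemma col_mate k x y : x != y -> col (mate k x) (mate k y) = col x y.
Proof.
have [[mx kx] [my ky]] := (mateP k x, mateP k y) => xy.
by apply/esym/rectangle; rewrite // 1?eq_sym // kx ky.
Qed.

Lemma colour_preserving_mate (g : 'I_s -> 'I_s) : injective g ->
  (forall x y, x != y -> col (g x) (g y) = col x y) -> (forall x, g x != x) ->
  forall x y, g x = mate (col y (g y)) x.
Proof.
move=> g_inj g_col g_fix x y; apply: mate_unique; first exact: g_fix.
have [<- // | xy] := eqVneq x y.
apply: rectangle => //; first by rewrite (inj_eq g_inj).
  by rewrite eq_sym g_fix.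
by rewrite g_col.
Qed.

Lemma mate_comp_fixfree k l x : k != l -> mate k (mate l x) != x.
Proof.
move=> kl; apply: contra_neq kl => mmx.
have [lx lE] := mateP l x.
have [_ <-] := mateP k (mate l x).
by rewrite mmx hsym.
Qed.

Variable z : 'I_s.

Definition translation (v : 'I_s) : 'I_s -> 'I_s :=
  if v == z then id else mate (col z v).

Lemma translation_z x : translation z x = x.
Proof. by rewrite /translation eqxx. Qed.

Lemma translation_at_z v : translation v z = v.
Proof.
rewrite /translation; case: eqVneq => [-> // | vz].
by apply/esym/mate_unique; rewrite // eq_sym.
Qed.

Lemma translationK v : involutive (translation v).
Proof. by rewrite /translation; case: eqP => _ //; apply: mateK. Qed.

Lemma translation_comp u v x :
  translation v (translation u x) = translation (translation v u) x.
Proof.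
have [-> | uz] := eqVneq u z; first by rewrite !translation_z translation_at_z.
have [-> | vz] := eqVneq v z; first by rewrite !translation_z.
have tE w : w != z -> translation w = mate (col z w) by rewrite /translation => /negPf ->.
have [kl | kl] := eqVneq (col z u) (col z v).
  have <- : u = v by apply: (@matching_inj z); rewrite 1?eq_sym.
  by rewrite translationK -{2}(translation_at_z u) translationK translation_z.
set g := fun y => mate (col z v) (mate (col z u) y).
have g_inj : injective g by apply: inj_comp; apply: mate_inj.
have g_col x1 x2 : x1 != x2 -> col (g x1) (g x2) = col x1 x2.
  by move=> x12; rewrite !col_mate // (inj_eq (@mate_inj _)).
have g_fix y : g y != y by apply: mate_comp_fixfree; rewrite eq_sym.
have uE : u = mate (col z u) z by rewrite -(tE u uz) translation_at_z.
have gz : g z = mate (col z v) u by rewrite /g -uE.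
rewrite (tE u uz) (tE v vz) -/(g x) (colour_preserving_mate g_inj g_col g_fix x z).
by rewrite -gz tE ?g_fix.
Qed.

Definition translation_perm v := perm (can_inj (translationK v)).

Lemma translation_permE v : translation_perm v =1 translation v.
Proof. exact: permE. Qed.

Definition translations := [set translation_perm v | v : 'I_s].

Lemma translations_group : group_set translations.
Proof.
apply/group_setP; split.
  apply/imsetP; exists z => //; apply/permP => x.
  by rewrite perm1 translation_permE translation_z.
move=> _ _ /imsetP[u _ ->] /imsetP[v _ ->].
apply/imsetP; exists (translation v u) => //.
by apply/permP => x; rewrite permM !translation_permE translation_comp.
Qed.

Lemma card_translations : #|translations| = s.
Proof.
rewrite card_in_imset ?card_ord // => u v _ _ E.
by rewrite -(translation_at_z u) -(translation_at_z v) -!translation_permE E.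
Qed.

Lemma exponent_translations : exponent (Group translations_group) %| 2.
Proof.
apply/exponentP => _ /imsetP[v _ ->]; apply/permP => x.
by rewrite expgS expg1 permM perm1 !translation_permE translationK.
Qed.

End MatchingColouring.

Theorem lemma4p2 (s : nat) (hs : 2 <= s) (col : 'I_s -> 'I_s -> 'I_(s.-1))
  (hsym : sym_colouring col)
  (hmatch : classes_are_matchings col)
  (h4 : four_sets_3_or_6 col) :
  exists p : nat, s = 2 ^ p.
Proof.
pose z : 'I_s := Ordinal (ltnW hs).
have [p card_p] := card_exponent2 (exponent_translations hsym hmatch h4 z).
by exists p; rewrite -card_p card_translations.
Qed.
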